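(* Let $n \ge 1$ be an integer and let $A_n \in \{0,1\}^{[2]^n \times [2]^n}$ be the binary single-grain-error channel: for $x,y \in [2]^n$ (indexed $x = x_0x_1\cdots x_{n-1}$), $(A_n)_{x,y}=1$ if and only if either $y = x$, or there exists $j \in \{0,\dots,n-2\}$ such that $y_j = x_{j+1}$ and $y_i = x_i$ for all $i \ne j$. For $y \in [2]^n$ let $r_y$ be the number of runs of $y$, $u_y$ the number of runs of length one, $b^L_y \in \{0,1\}$ the indicator that the first run of $y$ has length one, and $b^R_y \in\{0,1\}$ the indicator that the last run of $y$ has length one. Then the vector $z \in \mathbb{R}^{[2]^n}$ with \[ z_y = \frac{1}{r_y}\left(1 + \frac{2u_y - 2b^R_y - b^L_y - 2}{(r_y+2)(r_y+1)}\right)^{-1} \] is feasible for $\kappa^*(A_n)$, i.e. $z \ge \mathbf{0}$ and $A_n z \ge \mathbf{1}$ entrywise.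
   Context: $[2]=\{0,1\}$; a run of a string is a maximal block of consecutive equal symbols. For $A \in \{0,1\}^{X\times Y}$, $\kappa^*(A) = \min\{\mathbf{1}^T z : z\in\mathbb{R}^Y,\ z \ge \mathbf{0},\ Az \ge \mathbf{1}\}$ (entrywise inequalities). *)

From mathcomp Require Import all_boot all_order all_algebra.
Set Implicit Arguments. Unset Strict Implicit. Unset Printing Implicit Defensive.
Import Order.TTheory GRing.Theory Num.Theory.

(* Run lengths of a binary string, left to right.
   rl_aux b k s : current run has symbol b and length k so far, s remains. *)
Fixpoint rl_aux (b : bool) (k : nat) (s : seq bool) : seq nat :=
  match s with
  | [::] => [:: k]
  | c :: s' => if c == b then rl_aux b k.+1 s' else k :: rl_aux c 1 s'
  end.

Definition run_lengths (s : seq bool) : seq nat :=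
  match s with [::] => [::] | b :: s' => rl_aux b 1 s' end.

Definition nruns (s : seq bool) : nat := size (run_lengths s).
Definition nsingle_runs (s : seq bool) : nat := count (pred1 1%N) (run_lengths s).
Definition bL (s : seq bool) : nat := (head 0%N (run_lengths s) == 1%N).
Definition bR (s : seq bool) : nat := (last 0%N (run_lengths s) == 1%N).

Definition grain_channel (n : nat) (x y : n.-tuple bool) : bool :=
  (y == x) ||
  [exists j : 'I_n, (j.+1 < n)%N &&
     [&& [exists i : 'I_n, (val i == j.+1) && (tnth y j == tnth x i)] &
         [forall i : 'I_n, (i != j) ==> (tnth y i == tnth x i)]]].

Definition kappa_feasible (R : numDomainType) (X Y : finType)
    (A : X -> Y -> bool) (z : Y -> R) : Prop :=
  (forall y, 0 <= z y)%R /\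
  (forall x, 1 <= \sum_(y : Y) (A x y)%:R * z y)%R.

From mathcomp Require Import all_boot all_order all_algebra.
From mathcomp Require Import zify ring lra.
Import Order.TTheory GRing.Theory Num.Theory.

(* Row x of A_n contains x itself and, for every boundary j (a position with
   x_j != x_(j+1), j <= n - 2), the string obtained by copying x_(j+1) into
   position j; these strings are pairwise distinct.  Such an error removes one
   run when j = 0, two runs when the run ending at j is a singleton, and none
   otherwise, while raising c := 2u - 2b^R - b^L - 2 by at most 2.  The weight
   z = f(r, c) is convex in c, so it dominates its tangent line at c = 0,
   1/r - c/(r(r+1)(r+2)); after an error that removes k runs, f(r - k, c') still
   dominates the tangent for r runs evaluated at c + 2 - k r.  Summing these
   affine bounds over x and its r - 1 boundaries, the removed runs add up to at
   least c + 2, and the total is at least 1 + 2/(r(r+1)(r+2)). *)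

Set Implicit Arguments.
Unset Strict Implicit.
Unset Printing Implicit Defensive.

Lemma rl_aux_cons b s : exists m rs, forall k, rl_aux b k s = (k + m) :: rs.
Proof.
elim: s b => [|c s IH] b /=; first by exists 0, [::] => k; rewrite addn0.
have [<-|_] := eqVneq c b; last by exists 0, (rl_aux c 1 s) => k; rewrite addn0.
by have [m [rs E]] := IH c; exists m.+1, rs => k; rewrite E addSnnS.
Qed.

Lemma rl_aux_cat b k s : exists rs l, rl_aux b k s = rcons rs l /\
  forall t, rl_aux b k (s ++ t) = rs ++ rl_aux (last b s) l t.
Proof.
elim: s b k => [|c s IH] b k /=; first by exists [::], k.
case: eqP => [->|_]; first exact: IH.
have [rs [l [-> E]]] := IH c 1; exists (k :: rs), l; split=> // t.
by rewrite E.
Qed.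

Lemma rl_aux_neq0 b k s : 0 < k -> 0 \notin rl_aux b k s.
Proof.
elim: s b k => [|c s IH] b k /= k_gt0; first by rewrite mem_seq1 eq_sym -lt0n.
case: eqP => _; first exact: IH.
by rewrite in_cons negb_or eq_sym -lt0n k_gt0 IH.
Qed.

Definition boundary (w : seq bool) j := nth false w j != nth false w j.+1.

(* At a boundary j: the run ending at j is a singleton.  As in rl_aux, k is the
   length, up to w_0 included, of the run containing w_0. *)
Definition singleton_end k (w : seq bool) j :=
  if j is i.+1 then nth false w i != nth false w j else k == 1.

Lemma size_rl_aux b k s :
  size (rl_aux b k s) = (\sum_(0 <= j < size s) boundary (b :: s) j).+1.
Proof.
elim: s b k => [|c s IH] b k; first by rewrite big_geq.
rewrite /= big_nat_recl // {1}/boundary /=.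
by have [<-|_] := eqVneq c b; rewrite /= IH.
Qed.

Lemma count1_rl_aux b k s : 0 < k ->
  count (pred1 1) (rl_aux b k s) = (last 0 (rl_aux b k s) == 1) +
    \sum_(0 <= j < size s) (boundary (b :: s) j && singleton_end k (b :: s) j).
Proof.
elim: s b k => [|c s IH] b k k_gt0; first by rewrite big_geq //= addn0.
rewrite /= big_nat_recl // {1}/boundary /=.
have [<-|cb] := eqVneq c b.
  rewrite IH // add0n; congr (_ + _); apply: eq_bigr => -[|i] _ //=.
  by rewrite /singleton_end /boundary /= eqxx; case: k k_gt0.
have [rs [l [E _]]] := rl_aux_cat c 1 s.
rewrite /= IH // E /= !last_rcons addnCA; congr (_ + (_ + _)).
by apply: eq_bigr => -[|i] _ //=; rewrite /singleton_end /= eq_sym cb.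
Qed.

Lemma nruns_boundaries s : 0 < size s ->
  nruns s = (\sum_(0 <= j < (size s).-1) boundary s j).+1.
Proof. by case: s => // b s _; rewrite /nruns size_rl_aux. Qed.

Lemma nsingle_runs_boundaries s : 0 < size s -> nsingle_runs s =
  bR s + \sum_(0 <= j < (size s).-1) (boundary s j && singleton_end 1 s j).
Proof. by case: s => // b s _; rewrite /nsingle_runs /bR count1_rl_aux. Qed.

Lemma nsingle_runs_lt s : 0 < size s -> nsingle_runs s < nruns s + bR s.
Proof.
case: s => // b s _; rewrite /nsingle_runs /nruns /bR /=.
have [rs [l [-> _]]] := rl_aux_cat b 1 s.
by rewrite size_rcons last_rcons -cats1 count_cat /= addn0 ltn_add2r ltnS count_size.
Qed.

Lemma bL_boundary s : 1 < size s -> bL s = boundary s 0.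
Proof.
case: s => [|b [|c t]] // _; rewrite /bL /boundary /=.
have [<-|_] //= := eqVneq c b.
by have [m [rs ->]] := rl_aux_cons c t.
Qed.

Definition defect {R : pzRingType} (s : seq bool) : R :=
  (2 * (nsingle_runs s)%:R - 2 * (bR s)%:R - (bL s)%:R - 2)%R.

Lemma intr_defect (R : pzRingType) s : ((defect s : int)%:~R)%R = defect s :> R.
Proof. by rewrite /defect !(rmorphB, rmorphM, rmorph_nat). Qed.

Lemma defect_bounds (R : numDomainType) s : 0 < size s ->
  (-3 <= defect s :> R)%R /\ (defect s <= 2 * (nruns s)%:R - 4 :> R)%R.
Proof.
move=> s_gt0.
suff: (-3 <= defect s :> int)%R /\ (defect s <= 2 * (nruns s)%:R - 4 :> int)%R.
  by rewrite -!(ler_int R) !intr_defect !(rmorphB, rmorphM, rmorphN, rmorph_nat).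
have := nsingle_runs_lt s_gt0; have := nsingle_runs_boundaries s_gt0.
rewrite /defect /bL /bR; lia.
Qed.

(* The number of runs destroyed by the grain error at a boundary j. *)
Definition runs_drop (s : seq bool) j :=
  if j is i.+1 then (nth false s i != nth false s j).*2 else 1.

Lemma runs_drop_le2 s j : runs_drop s j <= 2.
Proof. by case: j => [|i] //=; case: (_ != _). Qed.

Lemma defect_le_runs_drop s : 0 < size s ->
  (defect s + 2 <= (\sum_(0 <= j < (size s).-1) boundary s j * runs_drop s j)%:R :> int)%R.
Proof.
move=> s_gt0; rewrite /defect nsingle_runs_boundaries //.
case: s s_gt0 => [|b [|c t]] // _.
  by rewrite big_geq // /bL /bR /=; lia.
rewrite bL_boundary //= !big_nat_recl //=.
have mul_double (p q : bool) : p * q.*2 = 2 * (p && q) by case: p; case: q.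
under [in X in (_ <= X)%R]eq_bigr do rewrite mul_double.
rewrite -big_distrr /=; lia.
Qed.

Definition grain_error (s : seq bool) j := set_nth false s j (nth false s j.+1).

Lemma grain_error_neq s j : boundary s j -> grain_error s j != s.
Proof.
move=> bnd; apply/eqP => /(congr1 (nth false ^~ j)); rewrite nth_set_nth /= eqxx => e.
by move: bnd; rewrite /boundary e eqxx.
Qed.

Lemma grain_error_inj s j k : boundary s j -> grain_error s j = grain_error s k -> j = k.
Proof.
move=> bnd /(congr1 (nth false ^~ j)); rewrite !nth_set_nth /= eqxx.
have [//|_ e] := eqVneq j k.
by move: bnd; rewrite /boundary e eqxx.
Qed.

Lemma runs_grain_error_head a b q : a != b ->
  nruns [:: a, b & q] = (nruns [:: b, b & q]).+1 /\
  (defect [:: b, b & q] <= defect [:: a, b & q] + 2 :> int)%R.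
Proof.
move=> ab; have [m [rs E]] := rl_aux_cons b q.
rewrite /defect /nruns /nsingle_runs /bR /bL /= eqxx eq_sym (negbTE ab) !E /=.
by case: rs {E} => [|r rs] /=; lia.
Qed.

Lemma runs_grain_error_inner h p a b q : a != b ->
  nruns (h :: p ++ [:: a, b & q]) = nruns (h :: p ++ [:: b, b & q]) + (last h p != a).*2 /\
  (defect (h :: p ++ [:: b, b & q]) <= defect (h :: p ++ [:: a, b & q]) + 2 :> int)%R.
Proof.
move=> ab; have [rs [l [E1 E2]]] := rl_aux_cat h 1 p.
have : 0 \notin rcons rs l by rewrite -E1 rl_aux_neq0.
rewrite mem_rcons in_cons negb_or eq_sym -lt0n => /andP[l_gt0 _].
have [m [rs' E]] := rl_aux_cons b q.
have neq2_eq_bool (x y z : bool) : x != y -> y != z -> x = z by case: x; case: y; case: z.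
rewrite /defect /nruns /nsingle_runs /bR /bL /= !E2.
have [->|/neq2_eq_bool/(_ ab)->] := eqVneq (last h p) a;
  rewrite /= eqxx ?(negbTE ab) eq_sym (negbTE ab) !E ?eqxx;
  case: rs {E1 E2} => [|r rs] /=; case: rs' {E} => [|r' rs'];
  rewrite /= ?size_cat ?count_cat ?last_cat /=; lia.
Qed.

Lemma runs_grain_error_cat p a b q : a != b ->
  nruns (p ++ [:: a, b & q]) =
    nruns (p ++ [:: b, b & q]) + runs_drop (p ++ [:: a, b & q]) (size p) /\
  (defect (p ++ [:: b, b & q]) <= defect (p ++ [:: a, b & q]) + 2 :> int)%R.
Proof.
case: p => [|h p] ab; first by rewrite addn1; apply: runs_grain_error_head.
have -> : runs_drop (h :: p ++ [:: a, b & q]) (size p).+1 = (last h p != a).*2.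
  by rewrite /runs_drop -cat_cons !nth_cat ltnn subnn /= ltnSn (nth_last false (h :: p)).
exact: runs_grain_error_inner.
Qed.

Lemma runs_grain_error s j : j.+1 < size s -> boundary s j ->
  nruns s = nruns (grain_error s j) + runs_drop s j /\
  (defect (grain_error s j) <= defect s + 2 :> int)%R.
Proof.
move=> j_lt bnd; have j_lt' := ltnW j_lt.
have Es : take j s ++ [:: nth false s j, nth false s j.+1 & drop j.+2 s] = s.
  by rewrite -[RHS](cat_take_drop j) (drop_nth false j_lt') (drop_nth false j_lt).
have Ey : take j s ++ [:: nth false s j.+1, nth false s j.+1 & drop j.+2 s] =
    grain_error s j.
  by rewrite /grain_error set_nthE j_lt' (drop_nth false j_lt).
by have := runs_grain_error_cat (take j s) (drop j.+2 s) bnd; rewrite Es Ey size_take j_lt'.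
Qed.

Local Open Scope ring_scope.

Definition grain_weight {R : realFieldType} (r : nat) (c : R) : R :=
  r%:R^-1 * (1 + c / ((r + 2)%N%:R * (r + 1)%N%:R))^-1.

(* grain_weight r is convex in c; this is its tangent line at c = 0. *)
Definition tangent_weight {R : realFieldType} (r : nat) (e : R) : R :=
  r%:R^-1 - e / (r%:R * ((r%:R + 1) * (r%:R + 2))).

Section Weights.
Variable R : realFieldType.
Implicit Types (r k : nat) (a b c d e : R).

Lemma ler_pdiv_pdiv a b c d : 0 < b -> 0 < d -> (a / b <= c / d) = (a * d <= c * b).
Proof. by move=> b_gt0 d_gt0; rewrite ler_pdivrMr // mulrAC ler_pdivlMr. Qed.

Lemma grain_weightE r c : (0 < r)%N -> -3 <= c ->
  grain_weight r c = (r%:R + 1) * (r%:R + 2) / (r%:R * ((r%:R + 1) * (r%:R + 2) + c)).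
Proof.
move=> r_gt0 c_ge; have x_ge1 : 1 <= r%:R :> R by rewrite ler1n.
by rewrite /grain_weight !natrD; field; rewrite !lt0r_neq0 //; nra.
Qed.

Lemma tangent_weightE r e : (0 < r)%N ->
  tangent_weight r e = ((r%:R + 1) * (r%:R + 2) - e) / (r%:R * ((r%:R + 1) * (r%:R + 2))).
Proof.
move=> r_gt0; have x_ge1 : 1 <= r%:R :> R by rewrite ler1n.
by rewrite /tangent_weight; field; rewrite !lt0r_neq0 //; nra.
Qed.

Lemma grain_weight_ge0 r c : (0 < r)%N -> -3 <= c -> 0 <= grain_weight r c.
Proof.
move=> r_gt0 c_ge; have x_ge1 : 1 <= r%:R :> R by rewrite ler1n.
by rewrite grain_weightE // divr_ge0 //; nra.
Qed.

Lemma tangent_weight_le r e e' : e <= e' -> tangent_weight r e' <= tangent_weight r e.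
Proof.
move=> le_ee'; rewrite lerD2l lerN2 ler_wpM2r // invr_ge0.
by rewrite !mulr_ge0 // addr_ge0.
Qed.

Lemma tangent_weight_le_grain_weight r c : (0 < r)%N -> -3 <= c ->
  tangent_weight r c <= grain_weight r c.
Proof.
move=> r_gt0 c_ge; have x_ge1 : 1 <= r%:R :> R by rewrite ler1n.
rewrite grain_weightE // tangent_weightE // ler_pdiv_pdiv; try by rewrite !mulr_gt0 //; nra.
by have := sqr_ge0 c; nra.
Qed.

Lemma tangent_weight_le_grain_weight_drop r k c :
  (0 < r)%N -> (k <= 2)%N -> -3 <= c -> c <= 2 * r%:R - 4 ->
  tangent_weight (r + k) (c - (k * (r + k))%:R) <= grain_weight r c.
Proof.
case: k => [|k] r_gt0 k_le2 c_ge c_le.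
  by rewrite addn0 mul0n subr0 tangent_weight_le_grain_weight.
have x_ge1 : 1 <= r%:R :> R by rewrite ler1n.
rewrite grain_weightE // tangent_weightE ?addn_gt0 ?r_gt0 // !(natrD, natrM) ler_pdiv_pdiv;
  try by have k_ge0 := ler0n R k.+1; rewrite !mulr_gt0 //; nra.
set x := r%:R in x_ge1 c_le *.
case: k k_le2 => [|[|//]] _.
- have := sqr_ge0 (2 * c - 3 * x - 6).
  have : 0 <= x * (2 * c - 3 * x - 6) ^+ 2 by rewrite mulr_ge0 ?sqr_ge0 //; lra.
  have : 0 <= x * x * x by rewrite mulr_ge0 //; nra.
  nra.
- set t := 2 * x - 4 - c; have t_ge0 : 0 <= t by rewrite /t; lra.
  have : 0 <= x * t ^+ 2 by rewrite mulr_ge0 ?sqr_ge0 //; lra.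
  have : 0 <= x * x * t by rewrite mulr_ge0 //; nra.
  have : 0 <= x * t by rewrite mulr_ge0 //; lra.
  have -> : c = 2 * x - 4 - t by rewrite /t; ring.
  nra.
Qed.

Lemma tangent_weight_le_grain_error s j : (j.+1 < size s)%N -> boundary s j ->
  tangent_weight (nruns s) (defect s + 2 - (runs_drop s j * nruns s)%:R) <=
  grain_weight (nruns (grain_error s j)) (defect (grain_error s j)) :> R.
Proof.
move=> j_lt bnd; set y := grain_error s j.
have y_gt0 : (0 < size y)%N by rewrite size_set_nth leq_max.
have r_gt0 : (0 < nruns y)%N by rewrite nruns_boundaries.
have [-> defect_y_le] := runs_grain_error j_lt bnd.
have [defect_y_ge defect_y_le'] := defect_bounds R y_gt0.
move: defect_y_le; rewrite -(ler_int R) intr_defect rmorphD /= intr_defect => defect_y_le.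
apply: le_trans
  (tangent_weight_le_grain_weight_drop r_gt0 (runs_drop_le2 s j) defect_y_ge defect_y_le').
by apply: tangent_weight_le; lra.
Qed.

Lemma one_le_tangent_weight_sum s : (0 < size s)%N ->
  1 <= tangent_weight (nruns s) (defect s) +
       \sum_(0 <= j < (size s).-1 | boundary s j)
          tangent_weight (nruns s) (defect s + 2 - (runs_drop s j * nruns s)%:R) :> R.
Proof.
move=> s_gt0; have [c_ge _] := defect_bounds R s_gt0.
have := defect_le_runs_drop s_gt0.
rewrite -(ler_int R) rmorphD /= intr_defect !rmorph_nat (nruns_boundaries s_gt0).
set B := (\sum_(0 <= j < (size s).-1) boundary s j)%N.
set D := (\sum_(0 <= j < (size s).-1) boundary s j * runs_drop s j)%N.
set c := defect s in c_ge * => drops_ge.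
set x : R := B.+1%:R; set K := (x * ((x + 1) * (x + 2)))^-1.
have x_ge1 : 1 <= x by rewrite ler1n.
have summandE (b : bool) (d : nat) :
    (if b then tangent_weight B.+1 (c + 2 - (d * B.+1)%:R) else 0) =
    b%:R * (x^-1 - (c + 2) * K) + (b * d)%:R * (x * K).
  by case: b; rewrite /tangent_weight ?natrM -/x -/K /=; ring.
rewrite big_mkcond /=; under eq_bigr do rewrite summandE.
rewrite big_split /= -!mulr_suml -!natr_sum -/B -/D.
have -> : B%:R = x - 1 by rewrite /x -addn1 natrD addrK.
have -> : tangent_weight B.+1 c + ((x - 1) * (x^-1 - (c + 2) * K) + D%:R * (x * K)) =
    1 + K * (x * (D%:R - c - 2) + 2).
  by rewrite /tangent_weight -/x -/K; field; rewrite !lt0r_neq0 //; lra.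
rewrite lerDl mulr_ge0 //; first by rewrite invr_ge0 !mulr_ge0 //; lra.
by rewrite addr_ge0 // mulr_ge0 //; lra.
Qed.
End Weights.

Definition grain_error_tuple n (x : n.-tuple bool) j : n.-tuple bool :=
  insubd x (grain_error x j).

Lemma grain_error_tupleE n (x : n.-tuple bool) j : (j.+1 < n)%N ->
  grain_error_tuple x j = grain_error x j :> seq bool.
Proof.
move=> j_lt; rewrite /grain_error_tuple insubdK // unfold_in size_set_nth size_tuple.
by apply/eqP/maxn_idPr/ltnW.
Qed.

Lemma grain_channel_grain_error n (x : n.-tuple bool) j : (j.+1 < n)%N ->
  grain_channel x (grain_error_tuple x j).
Proof.
move=> j_lt; have j_lt' := ltnW j_lt.
have tnthE i : tnth (grain_error_tuple x j) i =
    if val i == j then tnth x (Ordinal j_lt) else tnth x i.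
  by rewrite !(tnth_nth false) grain_error_tupleE // nth_set_nth.
apply/orP; right; apply/existsP; exists (Ordinal j_lt'); rewrite /= j_lt /=.
apply/andP; split; first by apply/existsP; exists (Ordinal j_lt); rewrite /= tnthE !eqxx.
by apply/forallP => i; apply/implyP; rewrite tnthE -val_eqE /= => /negbTE ->.
Qed.

Lemma ler_sum_uniq_pred (R : numDomainType) (T : finType) (P : pred T) (F : T -> R)
    (s : seq T) : uniq s -> all P s -> (forall y, 0 <= F y) ->
  \sum_(y <- s) F y <= \sum_y (P y)%:R * F y.
Proof.
move=> s_uniq /allP sP F_ge0; rewrite big_uniq // big_mkcond /=; apply: ler_sum => y _.
by case: ifP => [/sP -> | _]; rewrite ?mul1r ?mulr_ge0.
Qed.

Lemma grain_channel_row_ge (R : numDomainType) n (x : n.-tuple bool)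
    (z : n.-tuple bool -> R) : (forall y, 0 <= z y) ->
  z x + \sum_(0 <= j < n.-1 | boundary x j) z (grain_error_tuple x j) <=
  \sum_y (grain_channel x y)%:R * z y.
Proof.
move=> z_ge0; set J := [seq j <- index_iota 0 n.-1 | boundary x j].
have J_lt j : j \in J -> (j.+1 < n)%N /\ boundary x j.
  by rewrite mem_filter mem_index_iota ltn_predRL => /andP[].
have := ler_sum_uniq_pred (P := grain_channel x) (s := x :: map (grain_error_tuple x) J)
  _ _ z_ge0.
rewrite big_cons big_map big_filter; apply.
  rewrite /= map_inj_in_uniq ?filter_uniq ?iota_uniq ?andbT //.
    apply/mapP => -[j /J_lt[j_lt bnd] /(congr1 (@tval n bool))].
    rewrite grain_error_tupleE // => e.
    by move: (grain_error_neq bnd); rewrite -e eqxx.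
  move=> j k /J_lt[j_lt bnd] /J_lt[k_lt _] /(congr1 (@tval n bool)).
  by rewrite !grain_error_tupleE //; apply: grain_error_inj.
rewrite /= {1}/grain_channel eqxx /=; apply/allP => _ /mapP[j /J_lt[j_lt _] ->].
exact: grain_channel_grain_error.
Qed.

Theorem theorem3 (R : realFieldType) (n : nat) (hn : (1 <= n)%N) :
  kappa_feasible (@grain_channel n)
    (fun y : n.-tuple bool =>
       let r := nruns y in
       ((r%:R : R)^-1 *
        (1 + ((2 * (nsingle_runs y)%:R - 2 * (bR y)%:R - (bL y)%:R - 2)
              / ((r + 2)%N%:R * (r + 1)%N%:R)))^-1)%R).
Proof.
have z_ge0 (y : n.-tuple bool) : 0 <= grain_weight (nruns y) (defect y) :> R.
  have y_gt0 : (0 < size y)%N by rewrite size_tuple.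
  by apply: grain_weight_ge0; [rewrite nruns_boundaries | case: (defect_bounds R y_gt0)].
split; first exact: z_ge0.
move=> x; have x_gt0 : (0 < size x)%N by rewrite size_tuple.
apply: le_trans (grain_channel_row_ge x z_ge0).
apply: le_trans (one_le_tangent_weight_sum R x_gt0) _.
rewrite size_tuple; apply: lerD.
  apply: tangent_weight_le_grain_weight; first by rewrite nruns_boundaries.
  by case: (defect_bounds R x_gt0).
rewrite big_nat_cond [X in _ <= X]big_nat_cond.
apply: ler_sum => j /andP[/andP[_]]; rewrite ltn_predRL => j_lt bnd.
rewrite grain_error_tupleE //.
by apply: tangent_weight_le_grain_error; rewrite ?size_tuple.
Qed.
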